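(* Let $p$ be an odd prime, $e\geq 2$, and $N$ cyclic of order $p^e$. Let $G$ be a transitive subgroup of $\mathrm{Hol}(N)$, $H$ any subgroup of $G$ of index $p^e$, and $C=\mathrm{Core}_G(H)$. The following are equivalent: (1) $G/C$ is isomorphic to a transitive subgroup $T$ of $\mathrm{Hol}(N)$ under an isomorphism that sends $H/C$ to $\mathrm{Stab}_T(1_N)$; (2) $H$ is conjugate to $\mathrm{Stab}_G(1_N)$ in $G$.
   Context: $\mathrm{Hol}(N)=N\rtimes\mathrm{Aut}(N)$ acts on $N$ by $(\eta,\alpha)\cdot x=\eta\,\alpha(x)$; a subgroup is transitive if it acts transitively on $N$, and $\mathrm{Stab}_T(1_N)=T\cap\mathrm{Aut}(N)$ is the stabiliser of the identity. $\mathrm{Core}_G(H)$ is the largest normal subgroup of $G$ contained in $H$. *)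

From mathcomp Require Import all_boot all_fingroup all_solvable.
Set Implicit Arguments. Unset Strict Implicit. Unset Printing Implicit Defensive.
Local Open Scope group_scope.

(* The holomorph Hol(N) = N x| Aut(N) of N = [set: gT], realised (faithfully)
   as the group of permutations of N of the form x |-> eta * alpha x,
   with eta in N and alpha in Aut(N); this is exactly the action
   (eta, alpha) . x = eta alpha(x). *)
Definition Hol (gT : finGroupType) : {set {perm gT}} :=
  [set s : {perm gT} | [exists eta : gT, exists a in Aut [set: gT],
                          [forall x, s x == eta * a x]]].

(* Every element of Hol(N) is an affine map x |-> b x^a with a prime to p.
   Let z be the element of order p of N and tau the translation by z.  Since
   Hol(N) normalises <tau> and s^phi(p^e) lies in <tau> for every s in Hol(N),
   if tau is in H then tau is in C = Core_G(H) and the exponent of G/C divides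
   phi(p^e) = (p-1) p^(e-1).  On the other hand a Sylow p-subgroup of a
   transitive T <= Hol(N) is still transitive, so it contains a p-element
   q : x |-> c x^a with c a generator; then a = 1 mod p, and as p is odd,
   1 + a + ... + a^(p^k - 1) has p-adic valuation exactly k, which forces
   #[q] >= p^e.  Hence G/C ~ T forces tau not in H, so H meets the
   translations trivially (each of them has a power equal to tau), and H
   embeds in the cyclic group Aut(N) via its linear part; a generator of H has a fixed
   point y, so H = Stab_G(y) by orders, a conjugate of Stab_G(1).
   Conversely a conjugate of a point stabiliser of a transitive group is
   core-free, and conjugation gives the required isomorphism G/1 ~ G. *)

From mathcomp Require Import all_boot all_fingroup all_solvable zify.
Set Implicit Arguments. Unset Strict Implicit. Unset Printing Implicit Defensive.

Definition geosum (a n : nat) := \sum_(i < n) a ^ i.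

Lemma geosum0 a : geosum a 0 = 0.
Proof. exact: big_ord0. Qed.

Lemma geosumS a n : geosum a n.+1 = geosum a n + a ^ n.
Proof. exact: big_ord_recr. Qed.

Lemma geosumSl a n : geosum a n.+1 = 1 + a * geosum a n.
Proof.
rewrite /geosum big_ord_recl big_distrr; congr (_ + _).
by apply: eq_bigr => i _; rewrite expnS.
Qed.

Lemma geosumD a m n : geosum a (m + n) = geosum a m + a ^ m * geosum a n.
Proof.
elim: n => [|n IHn]; first by rewrite addn0 geosum0 muln0 addn0.
by rewrite addnS !geosumS IHn mulnDr -expnD addnA.
Qed.

Lemma geosumM a m n : geosum a (m * n) = geosum a m * geosum (a ^ m) n.
Proof.
elim: n => [|n IHn]; first by rewrite muln0 !geosum0 muln0.
by rewrite mulnS addnC geosumD IHn geosumS mulnDr -expnM [_ * geosum a m]mulnC.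
Qed.

Lemma coprime_prime_gt0 a p : prime p -> coprime a p -> 0 < a.
Proof. by move=> p_pr; case: a => //; rewrite /coprime gcd0n => /eqP p1; rewrite p1 in p_pr. Qed.

Lemma expn_eq1_mod a n d : 0 < a -> (a ^ n == 1 %[mod d]) = (d %| a.-1 * geosum a n).
Proof. by move=> a_gt0; rewrite eqn_mod_dvd ?expn_gt0 ?a_gt0 // subn1 predn_exp. Qed.

Lemma expn_pexp_mod a p m : prime p -> a ^ (p ^ m) = a %[mod p].
Proof.
move=> p_pr; elim: m => [|m IHm]; first by rewrite expn0 expn1.
by rewrite expnSr expnM -modnXm IHm modnXm fermat_little.
Qed.

Section OddPrime.
Variable p : nat.
Hypotheses (p_pr : prime p) (p_odd : odd p).

Lemma geosum_prime b : b = 1 %[mod p] -> exists2 u, coprime u p & geosum b p = p * u.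
Proof.
have p_gt1 := prime_gt1 p_pr.
move=> b1; have [k ->] : exists k, b = 1 + p * k.
  exists (b %/ p); rewrite {1}(divn_eq b p) b1 modn_small //; lia.
have [q p_def] : exists q, p = q.*2.+1.
  by exists p./2; rewrite -{1}(odd_double_half p) p_odd.
have pow_mod i : exists M, (1 + p * k) ^ i = 1 + i * (p * k) + p ^ 2 * M.
  elim: i => [|i [M IHi]]; first by exists 0; rewrite expn0; lia.
  by exists (M + i * k * k + M * p * k); rewrite expnS IHi; nia.
(* Doubling the sum avoids halving n (n + 1); for n + 1 = p odd, n is even. *)
have sum_mod n : exists M,
    geosum (1 + p * k) n.+1 * 2 = n.+1 * 2 + p * k * (n.+1 * n) + 2 * (p ^ 2 * M).
  elim: n => [|n [M IHn]]; first by exists 0; rewrite geosumS geosum0; lia.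
  have [M1 E1] := pow_mod n.+1.
  by exists (M + M1); rewrite geosumS mulnDl IHn E1; nia.
have [M E] := sum_mod q.*2; rewrite -p_def in E.
exists (1 + p * (k * q + M)).
  by rewrite -coprime_modl addnC mulnC modnMDl modn_small // coprime1n.
apply/eqP; rewrite -(eqn_pmul2r (isT : 0 < 2)) E; apply/eqP; nia.
Qed.

Lemma geosum_pexp b j : b = 1 %[mod p] ->
  exists2 u, coprime u p & geosum b (p ^ j) = p ^ j * u.
Proof.
move=> b1; elim: j => [|j [u u_p IHj]].
  by exists 1; rewrite ?coprime1n // geosumS geosum0.
have bpj1 : b ^ (p ^ j) = 1 %[mod p] by rewrite -modnXm b1 modnXm exp1n.
have [v v_p Ev] := geosum_prime bpj1.
exists (u * v); first by rewrite coprimeMl u_p v_p.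
by rewrite expnSr geosumM IHj Ev mulnACA.
Qed.

Lemma dvdn_geosum_totient e a : 0 < e -> coprime a p ->
  p ^ e.-1 %| geosum a (totient (p ^ e)).
Proof.
move=> e_gt0 a_p; have a_gt0 := coprime_prime_gt0 p_pr a_p.
have [a1 | a1_p] := boolP (a == 1 %[mod p]).
  rewrite totient_pfactor // mulnC geosumM.
  have [u _ ->] := geosum_pexp e.-1 (eqP a1).
  by rewrite -mulnA dvdn_mulr.
have : a ^ totient (p ^ e) == 1 %[mod p ^ e].
  by rewrite Euler_exp_totient // coprime_pexpr.
rewrite expn_eq1_mod // Gauss_dvdr.
  by apply: dvdn_trans; rewrite dvdn_exp2l // leq_pred.
by rewrite coprime_pexpl // prime_coprime // -subn1 -eqn_mod_dvd.
Qed.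

End OddPrime.

Lemma pexp_ndvd_totient p e : prime p -> 0 < e -> ~~ (p ^ e %| totient (p ^ e)).
Proof.
move=> p_pr e_gt0; rewrite totient_pfactor // -{1}(prednK e_gt0) expnS.
rewrite dvdn_pmul2r ?expn_gt0 ?prime_gt0 //; apply/negP => /dvdn_leq.
by rewrite -subn1 subn_gt0 prime_gt1 // => /(_ isT); rewrite leqNgt subn1 ltn_predL prime_gt0.
Qed.

Local Open Scope group_scope.

Section TransitiveActions.
Variables (aT : finGroupType) (rT : finType) (to : {action aT &-> rT}).
Implicit Types (G H Q : {group aT}) (S : {set rT}).

Lemma Sylow_transitive (p : nat) G Q S : [transitive G, on S | to] -> p.-nat #|S| ->
  p.-Sylow(G) Q -> [transitive Q, on S | to].
Proof.
move=> trG pS sylQ; have [x Sx] : exists x, x \in S.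
  by apply/set0Pn; apply: contraTneq pS => ->; rewrite cards0.
have [sQG pQ _] := and3P sylQ.
have indexG : #|G : 'C_G[x | to]| = #|S| by rewrite -card_orbit (atransP trG).
have oQ : #|Q| = (#|S| * #|'C_G[x | to]|`_p)%N.
  rewrite (card_Hall sylQ) -(Lagrange (subsetIl G 'C[x | to])) indexG.
  by rewrite mulnC partnM ?(part_pnat_id pS) // -indexG indexg_gt0.
have dv_Qx : #|'C_Q[x | to]| %| #|'C_G[x | to]|`_p.
  by rewrite -(part_pnat_id (pgroupS (subsetIl _ _) pQ)) partn_dvd ?cardSg ?setSI.
have dv_S : #|S| %| #|Q : 'C_Q[x | to]|.
  have [k Ek] := dvdnP dv_Qx.
  have := Lagrange (subsetIl Q 'C[x | to]); rewrite oQ Ek mulnA mulnC => /eqP /=.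
  by rewrite eqn_pmul2r ?cardG_gt0 // => /eqP ->; rewrite dvdn_mulr.
have sQx_S : orbit to Q x \subset S.
  by rewrite acts_sub_orbit // (subset_trans sQG) ?(atrans_acts trG).
apply/imsetP; exists x => //; apply/esym/eqP; rewrite eqEcard sQx_S card_orbit.
by rewrite dvdn_leq.
Qed.

Lemma astab1_conj G x g : g \in G -> 'C_G[x | to] :^ g = 'C_G[to x g | to].
Proof. by move=> Gg; rewrite conjIg (conjGid Gg) -astab1_act. Qed.

Lemma astab1_conj_transitive G S x y : [transitive G, on S | to] ->
  x \in S -> y \in S -> exists2 g, g \in G & 'C_G[y | to] = 'C_G[x | to] :^ g.
Proof.
by move=> trG Sx Sy; have [g Gg ->] := atransP2 trG Sx Sy; exists g; rewrite ?astab1_conj.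
Qed.

Lemma astab1_eq_index G H S y : [transitive G, on S | to] -> y \in S ->
  H \subset 'C_G[y | to] -> #|G : H| = #|S| -> H :=: 'C_G[y | to].
Proof.
move=> trG Sy sHGy iH; have sHG := subset_trans sHGy (subsetIl G _).
have iGy : #|G : 'C_G[y | to]| = #|S| by rewrite -card_orbit (atransP trG).
apply/eqP; rewrite eqEcard sHGy -(@leq_pmul2r #|S|) ?card_gt0; last by apply/set0Pn; exists y.
by rewrite -{1}iGy -iH /= !Lagrange ?subsetIl.
Qed.

End TransitiveActions.

Lemma astab_setT_perm (T : finType) : 'C([set: T] | 'P) = 1.
Proof.
apply/trivgP/subsetP => s /astabP fix_s; rewrite inE.
by apply/eqP/permP => x; rewrite perm1 -{2}(fix_s x) ?inE.
Qed.

Lemma gcore_astab1_perm (T : finType) (G : {group {perm T}}) y :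
  [transitive G, on [set: T] | 'P] -> gcore 'C_G[y | 'P] G = 1.
Proof.
move=> trG; apply/trivgP; rewrite -(astab_setT_perm T) (astab_trans_gcore trG (in_setT y)).
by rewrite sub_gcore ?gcore_norm // (subset_trans (gcore_sub _ _)) ?subsetIr.
Qed.

Lemma quotient1_conj_isom (gT : finGroupType) (G : {group gT}) g : g \in G ->
  exists f : {morphism G / 1 >-> gT},
    isom (G / 1) G f /\ forall A : {group gT}, A \subset G -> f @* (A / 1) = A :^ g^-1.
Proof.
move=> Gg; pose i1 := invm (@coset1_injm gT).
have sG1 : G / 1 \subset i1 @*^-1 G.
  apply/subsetP => _ /morphimP[x _ Gx ->]; apply/morphpreP; split.
    by apply: mem_morphim; rewrite /= norm1 inE.
  by move: Gx; rewrite -[x in x \in G](invmE (coset1_injm gT)) //= norm1 inE.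
pose f := restrm_morphism sG1 (comp_morphism i1 (conjgm_morphism G g^-1)).
have fA (A : {group gT}) : A \subset G -> f @* (A / 1) = A :^ g^-1.
  move=> sAG; rewrite morphim_restrm (setIidPr (quotientS _ sAG)) morphim_comp.
  rewrite morphim_invm ?norms1 //.
  by rewrite (morphim_conj G g^-1 A) (setIidPr sAG).
exists f; split; last exact: fA.
apply/isomP; split; last by rewrite fA // conjGid ?groupV.
by apply: injm_restrm; apply: injm_comp; [exact: injm_invm | exact: injm_conj].
Qed.

Lemma Aut_cyclic_odd_pgroup (gT : finGroupType) (G : {group gT}) (p : nat) :
  odd p -> p.-group G -> cyclic G -> cyclic (Aut G).
Proof.
move=> p_odd pG cG; have [-> | ntG] := eqsVneq G 1; first by rewrite Aut1 cyclic1.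
have [m [_ [_ cycF _ _]]] := cyclic_pgroup_Aut_structure pG cG ntG.
case: ifP => [_ -> // | _ [t [_ _ _]]].
by rewrite p_odd => -[[]].
Qed.

Section Holomorph.
Variables (gT : finGroupType) (p e : nat) (c : gT).
Hypotheses (p_pr : prime p) (p_odd : odd p) (e_gt0 : 0 < e).
Hypotheses (defN : [set: gT] = <[c]>) (oN : #|[set: gT]| = (p ^ e)%N).

Lemma commuteN (x y : gT) : commute x y.
Proof. by apply: (centsP (_ : abelian [set: gT])); rewrite ?inE ?defN ?cycle_abelian. Qed.

Lemma pgroupN : p.-group [set: gT].
Proof. by rewrite /pgroup oN pnatX pnat_id. Qed.

Lemma cyclicN : cyclic [set: gT].
Proof. by rewrite defN cycle_cyclic. Qed.

Lemma order_c : #[c] = (p ^ e)%N.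
Proof. by rewrite -oN defN. Qed.

Lemma expg_pe (x : gT) : x ^+ (p ^ e) = 1.
Proof. by rewrite -oN (@expg_cardG _ [set: gT]%G) ?inE. Qed.

Lemma expg_eqmod (x : gT) m n : m = n %[mod p ^ e] -> x ^+ m = x ^+ n.
Proof. by move=> Emn; rewrite -(expg_mod m (expg_pe x)) Emn expg_mod ?expg_pe. Qed.

Lemma exists_expc (x : gT) : exists m, x = c ^+ m.
Proof. by apply/cycleP; rewrite -defN inE. Qed.

Lemma eq_expc m n : (c ^+ m == c ^+ n) = (m == n %[mod p ^ e]).
Proof. by rewrite eq_expg_mod_order order_c. Qed.

Definition zp := c ^+ (p ^ e.-1).

Lemma order_zp : #[zp] = p.
Proof.
rewrite orderXdiv order_c ?dvdn_exp2l ?leq_pred //.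
by rewrite -(prednK e_gt0) expnS mulnK ?expn_gt0 ?prime_gt0.
Qed.

Lemma zp_neq1 : zp != 1.
Proof. by rewrite -order_eq1 order_zp; case: p p_pr => [|[]]. Qed.

Lemma exists_expg_zp b : b != 1 -> exists n, b ^+ n = zp.
Proof.
move=> b_neq1; have ntb : <[b]> != 1 by rewrite cycle_eq1.
have [_ p_b _] := pgroup_pdiv (pgroupS (subsetT <[b]>) pgroupN) ntb.
have [x bx ox] := Cauchy p_pr p_b.
have Exz : <[x]> = <[zp]>.
  by apply/eqP; rewrite (eq_subG_cyclic cyclicN) ?subsetT // -!orderE ox order_zp.
have : zp \in <[b]> by rewrite -cycle_subG -Exz cycle_subG.
by case/cycleP => n ->; exists n.
Qed.

Definition transl (b : gT) : {perm gT} := perm (mulgI b).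

Lemma translE b x : transl b x = b * x.
Proof. by rewrite permE. Qed.

Lemma translX b n : transl b ^+ n = transl (b ^+ n).
Proof.
elim: n => [|n IHn]; apply/permP => x; first by rewrite !expg0 perm1 translE mul1g.
by rewrite expgSr permM IHn !translE expgS mulgA.
Qed.

Lemma Hol_affine s : s \in Hol gT ->
  exists2 a, coprime a p & forall x, s x = s 1 * x ^+ a.
Proof.
rewrite inE => /existsP[eta /existsP[alpha /andP[Aut_alpha /forallP sE]]].
have [a alpha_c] := exists_expc (autm Aut_alpha c).
have alphaE x : autm Aut_alpha x = x ^+ a.
  have [m ->] := exists_expc x.
  by rewrite morphX ?inE //= alpha_c -!expgM mulnC.
have {}sE x : s x = eta * x ^+ a by rewrite -alphaE autmE; apply/eqP.
have s1 : s 1 = eta by rewrite sE expg1n mulg1.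
exists a; last by move=> x; rewrite sE s1.
rewrite coprime_sym prime_coprime //; apply: contra zp_neq1 => /dvdnP[k Ek].
suff : autm Aut_alpha zp = autm Aut_alpha 1 by rewrite !autmE => /perm_inj ->.
by rewrite morph1 alphaE /zp -expgM Ek mulnCA -expnSr prednK // expgM expg_pe.
Qed.

Lemma affine_expg (s : {perm gT}) b a : (forall x, s x = b * x ^+ a) ->
  forall n x, (s ^+ n) x = b ^+ geosum a n * x ^+ (a ^ n).
Proof.
move=> sE; elim=> [|n IHn] x; first by rewrite expg0 perm1 geosum0 expn0 expg1 mul1g.
rewrite expgSr permM IHn sE geosumSl expgD expgMn; last exact: commuteN.
by rewrite -!expgM mulgA expnSr mulnC.
Qed.

Lemma transl_conj_Hol b s : s \in Hol gT -> exists a, transl b ^ s = transl b ^+ a.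
Proof.
case/Hol_affine=> a _ sE; exists a; rewrite translX; apply/permP => y.
have [w ->] : exists w, y = s w by exists (s^-1 y); rewrite permKV.
rewrite conjgE !permM permK !translE sE (sE w) expgMn ?mulgA //; last exact: commuteN.
by congr (_ * _); apply: commuteN.
Qed.

Lemma Hol_expg_totient s : s \in Hol gT -> exists n, s ^+ totient (p ^ e) = transl zp ^+ n.
Proof.
case/Hol_affine=> a a_p sE.
have [g Eg] := dvdnP (dvdn_geosum_totient p_pr p_odd e_gt0 a_p).
have [m Em] := exists_expc (s 1).
have a_tot : a ^ totient (p ^ e) = 1 %[mod p ^ e].
  by rewrite Euler_exp_totient // coprime_pexpr.
exists (m * g)%N; rewrite translX; apply/permP => x.
rewrite (affine_expg sE) translE (expg_eqmod x a_tot) expg1 Eg Em /zp -!expgM.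
by rewrite mulnA mulnC.
Qed.

Lemma exponent_quotient_gcore_Hol (G H : {group {perm gT}}) :
  G \subset Hol gT -> transl zp \in H -> exponent (G / gcore H G) %| totient (p ^ e).
Proof.
move=> sGHol zH; have zC : transl zp \in gcore H G.
  apply/bigcapP => g Gg; rewrite mem_conjg.
  have [a ->] := transl_conj_Hol zp (subsetP sGHol _ (groupVr Gg)).
  exact: groupX.
apply/exponentP => _ /morphimP[x Nx Gx ->]; rewrite -morphX //; apply: coset_id.
by have [n ->] := Hol_expg_totient (subsetP sGHol x Gx); apply: groupX.
Qed.

Lemma Hol_pelt_order q : q \in Hol gT -> p.-elt q -> q 1 = c -> p ^ e %| #[q].
Proof.
move=> qHol pq q1; have [a _ qE] := Hol_affine qHol; rewrite q1 in qE.
have [m oq] := p_natP pq.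
have a1 : a = 1 %[mod p].
  have q_pm : q ^+ (p ^ m) = 1 by rewrite -oq expg_order.
  have := affine_expg qE (p ^ m) c; rewrite q_pm perm1.
  have := affine_expg qE (p ^ m) 1; rewrite q_pm perm1 expg1n mulg1 => <-.
  rewrite mul1g -{1}(expg1 c) => /eqP; rewrite eq_expc => /eqP a_pm.
  have p_dv_pe : p %| p ^ e by rewrite -{1}(expn1 p) dvdn_exp2l.
  by rewrite -(expn_pexp_mod a m p_pr) -(modn_dvdm _ p_dv_pe) -a_pm modn_dvdm.
have [u u_p Eu] := geosum_pexp p_pr p_odd e.-1 a1.
have q_pe1 : (q ^+ (p ^ e.-1)) 1 = zp ^+ u by rewrite (affine_expg qE) expg1n mulg1 Eu expgM.
have q_pe1_ne1 : q ^+ (p ^ e.-1) != 1.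
  apply/eqP => q_pe1_eq1; move: q_pe1; rewrite q_pe1_eq1 perm1 => /esym/eqP.
  by rewrite -order_dvdn order_zp; apply/negP; rewrite -prime_coprime // coprime_sym.
rewrite oq dvdn_exp2l ?prime_gt1 //; apply: contraR q_pe1_ne1; rewrite -ltnNge => m_lt_e.
by rewrite -order_dvdn oq dvdn_exp2l // -ltnS prednK.
Qed.

Lemma Hol_transitive_exponent (T : {group {perm gT}}) :
  T \subset Hol gT -> [transitive T, on [set: gT] | 'P] -> p ^ e %| exponent T.
Proof.
move=> sTHol trT; have [Q sylQ] := Sylow_exists p T.
have [q Qq qc] := atransP2 (Sylow_transitive trT pgroupN sylQ) (in_setT 1) (in_setT c).
have Tq : q \in T by apply: subsetP (pHall_sub sylQ) q Qq.
apply: dvdn_trans (dvdn_exponent Tq); apply: Hol_pelt_order.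
- exact: subsetP sTHol q Tq.
- exact: mem_p_elt (pHall_pgroup sylQ) Qq.
- by rewrite qc /= apermE.
Qed.

Lemma transl_zp_notin (G H T : {group {perm gT}}) :
  G \subset Hol gT -> T \subset Hol gT -> [transitive T, on [set: gT] | 'P] ->
  G / gcore H G \isog T -> transl zp \notin H.
Proof.
move=> sGHol sTHol trT isoGT; apply: contraTN (pexp_ndvd_totient p_pr e_gt0) => zH.
rewrite negbK (dvdn_trans (Hol_transitive_exponent sTHol trT)) //.
by rewrite -(exponent_isog isoGT) exponent_quotient_gcore_Hol.
Qed.

Lemma expg_pexp_root (x : gT) t : t <= e -> x ^+ (p ^ (e - t)) = 1 -> exists d, x = d ^+ (p ^ t).
Proof.
move=> le_te; have [m ->] := exists_expc x; rewrite -expgM => /eqP.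
rewrite -order_dvdn order_c -{1}(subnKC le_te) expnD dvdn_pmul2r ?expn_gt0 ?prime_gt0 //.
by case/dvdnP=> k ->; exists (c ^+ k); rewrite expgM.
Qed.

Lemma expg_coprime_root (x : gT) w : coprime w p -> exists y, y ^+ w = x.
Proof.
move=> w_p; have wN : coprime #|[set: gT]| w by rewrite oN coprime_pexpl // coprime_sym.
by exists (x ^+ expg_invn [set: gT] w); rewrite -expgM mulnC expgM expgK ?inE.
Qed.

Lemma affine_transl_order k a t : (forall j b, k ^+ j = transl b -> b = 1) ->
  coprime a p -> (forall x, k x = k 1 * x ^+ a) -> t <= e -> p ^ t %| a.-1 ->
  k 1 ^+ (p ^ (e - t)) = 1.
Proof.
move=> ntr a_p kE le_te; case: t le_te => [|t] le_te dv_a; first by rewrite subn0 expg_pe.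
have a_gt0 := coprime_prime_gt0 p_pr a_p.
have a1 : a = 1 %[mod p].
  apply/eqP; rewrite eqn_mod_dvd // subn1 (dvdn_trans _ dv_a) //.
  by rewrite -{1}(expn1 p) dvdn_exp2l.
have [u u_p Eu] := geosum_pexp p_pr p_odd (e - t.+1) a1.
have a_pow : a ^ (p ^ (e - t.+1)) = 1 %[mod p ^ e].
  apply/eqP; rewrite expn_eq1_mod // Eu -{1}(subnKC le_te) expnD mulnCA mulnC.
  by rewrite dvdn_mul ?dvdn_mulr.
have /ntr : k ^+ (p ^ (e - t.+1)) = transl (k 1 ^+ (p ^ (e - t.+1) * u)).
  by apply/permP => x; rewrite (affine_expg kE) Eu (expg_eqmod x a_pow) expg1 translE.
have ord_pe : #[k 1] %| p ^ e by rewrite -oN order_dvdG ?inE.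
have b_u : coprime #[k 1] u by rewrite (coprime_dvdl ord_pe) // coprime_pexpl // coprime_sym.
by move/eqP; rewrite -order_dvdn Gauss_dvdl // order_dvdn => /eqP.
Qed.

(* With k x = b x^a and a - 1 = w p^t, w prime to p, the fixed-point equation
   b y^(a-1) = 1 is solvable because b is a p^t-th power. *)
Lemma Hol_elt_fixpoint k : k \in Hol gT ->
  (forall j b, k ^+ j = transl b -> b = 1) -> exists y, k y = y.
Proof.
move=> kHol ntr; have [a a_p kE] := Hol_affine kHol.
have a_gt0 := coprime_prime_gt0 p_pr a_p.
have [pe_dv | pe_ndv] := boolP (p ^ e %| a.-1).
  exists 1; have := affine_transl_order ntr a_p kE (leqnn e) pe_dv.
  by rewrite subnn expg1.
have a1_gt0 : 0 < a.-1 by case: a.-1 pe_ndv; rewrite ?dvdn0.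
have [w p_w Ew] := pfactor_coprime p_pr a1_gt0; set t := logn p a.-1 in Ew.
have t_lt_e : t < e.
  by rewrite ltnNge; apply: contra pe_ndv => le_et; rewrite Ew dvdn_mull ?dvdn_exp2l.
have pt_dv : p ^ t %| a.-1 by rewrite Ew dvdn_mull.
have [d Ed] := expg_pexp_root (ltnW t_lt_e)
  (affine_transl_order ntr a_p kE (ltnW t_lt_e) pt_dv).
have [y yw] : exists y, y ^+ w = d^-1 by apply: expg_coprime_root; rewrite coprime_sym.
by exists y; rewrite kE -(prednK a_gt0) expgSr mulgA Ew expgM yw Ed expVgn mulgV mul1g.
Qed.

Lemma linpart_inj (s : {perm gT}) : injective (fun x => (s 1)^-1 * s x).
Proof. by move=> x y /mulgI /perm_inj. Qed.

Definition linpart s := perm (@linpart_inj s).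

Lemma linpartE s x : linpart s x = (s 1)^-1 * s x.
Proof. by rewrite permE. Qed.

Lemma linpart_Aut s : s \in Hol gT -> linpart s \in Aut [set: gT].
Proof.
case/Hol_affine=> a _ sE; rewrite inE; apply/andP; split.
  by apply/subsetP => x _; rewrite inE.
apply/morphicP => x y _ _; rewrite !linpartE (sE (x * y)) (sE x) (sE y) !mulKg.
by rewrite expgMn //; apply: commuteN.
Qed.

Lemma linpartM s t : s \in Hol gT -> t \in Hol gT -> linpart (s * t) = linpart s * linpart t.
Proof.
case/Hol_affine=> a _ sE; case/Hol_affine=> b _ tE; apply/permP => x.
rewrite permM !linpartE !permM (sE x) mulKg (tE (s 1)) (tE (s 1 * x ^+ a)) (tE (x ^+ a)).
rewrite expgMn; last exact: commuteN.
by rewrite [t 1 * (_ * _)]mulgA !mulKg.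
Qed.

Lemma Hol_subgroup_fixpoint (K : {group {perm gT}}) :
  K \subset Hol gT -> transl zp \notin K -> exists y, K \subset 'C[y | 'P].
Proof.
move=> sKHol zK; have linM : {in K &, {morph linpart : s t / s * t}}.
  by move=> s t Ks Kt; apply: linpartM; apply: (subsetP sKHol).
have no_transl k b : k \in K -> k = transl b -> b = 1.
  move=> Kk kb; apply: contraNeq zK => b_neq1.
  by have [n <-] := exists_expg_zp b_neq1; rewrite -translX -kb groupX.
pose f := Morphism linM.
have injf : 'injm f.
  apply/subsetP => k; rewrite !inE => /andP[Kk /eqP /= fk].
  have kE : k = transl (k 1).
    by apply/permP => x; rewrite translE -[k x](mulKVg (k 1)) -linpartE fk perm1.
  by rewrite kE (no_transl k (k 1) Kk kE); apply/eqP/permP => x; rewrite translE mul1g perm1.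
have cK : cyclic K.
  rewrite -(injm_cyclic injf (subxx K)).
  apply: cyclicS (Aut_cyclic_odd_pgroup p_odd pgroupN cyclicN).
  by apply/subsetP => _ /morphimP[k _ Kk ->]; apply: linpart_Aut (subsetP sKHol k Kk).
have [k defK] := cyclicP cK; have Kk : k \in K by rewrite defK cycle_id.
have [y ky] := Hol_elt_fixpoint (subsetP sKHol k Kk) (fun j b => no_transl _ b (groupX j Kk)).
by exists y; rewrite defK cycle_subG; apply/astab1P; rewrite /= apermE.
Qed.

End Holomorph.

Theorem proposition4p2 (gT : finGroupType) (p e : nat)
  (p_prime : prime p) (p_odd : odd p) (e_ge2 : (2 <= e)%N)
  (N_cyclic : cyclic [set: gT]) (N_order : #|[set: gT]| = (p ^ e)%N)
  (G H : {group {perm gT}})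
  (G_hol : G \subset Hol gT) (G_trans : [transitive G, on [set: gT] | 'P])
  (HG : H \subset G) (H_index : #|G : H| = (p ^ e)%N) :
  (exists T : {group {perm gT}},
     [/\ T \subset Hol gT, [transitive T, on [set: gT] | 'P] &
     exists f : {morphism (G / gcore H G) >-> {perm gT}},
       isom (G / gcore H G) T f /\
       f @* (H / gcore H G) = 'C_T[1 | 'P]])
  <->
  (exists2 g, g \in G & H :=: 'C_G[1 | 'P] :^ g).
Proof.
have [c defN] := cyclicP N_cyclic; have e_gt0 : (0 < e)%N by apply: leq_trans e_ge2.
split.
-
  case=> T [T_hol T_trans [f [isoGT _]]].
  have zH := transl_zp_notin p_prime p_odd e_gt0 defN N_order G_hol T_hol T_trans
    (isom_isog f (subxx _) isoGT).
  have [y sHy] := Hol_subgroup_fixpoint p_prime p_odd e_gt0 defN N_order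
    (subset_trans HG G_hol) zH.
  have defH : H :=: 'C_G[y | 'P].
    apply: astab1_eq_index G_trans (in_setT y) _ _; first by rewrite subsetI HG.
    by rewrite H_index N_order.
  have [g Gg defCy] := astab1_conj_transitive G_trans (in_setT 1) (in_setT y).
  by exists g; rewrite // defH.
- case=> g Gg defH.
  have -> : gcore H G = 1 by rewrite defH astab1_conj // gcore_astab1_perm.
  have [f [isoGG fA]] := quotient1_conj_isom Gg.
  exists G; split=> //; exists f; split=> //.
  by rewrite fA // defH conjsgK.
Qed.
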